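(* Let $P$ be a well-ordered phaser and suppose $P\to Q$. Then $P\mathbin{||}Q$, i.e. both $P\unrhd Q$ and $Q\unrhd P$.
   Context: A view is a record $v=(\mathrm{sp}(v),\mathrm{wp}(v),\mathrm{mode}(v))$ with $\mathrm{sp}(v),\mathrm{wp}(v)\in\mathbb{N}$ and $\mathrm{mode}(v)\in\{\mathtt{SW},\mathtt{SO},\mathtt{WO}\}$. For a view or mode, $\mathrm{CanSignal}$ means the mode is $\mathtt{SW}$ or $\mathtt{SO}$, and $\mathrm{CanWait}$ means the mode is $\mathtt{SW}$ or $\mathtt{WO}$. A phaser $P$ is a finite partial map from task identifiers to views. For views, $v_1\unrhd v_2$ iff $\mathrm{mode}(v_1)=\mathtt{WO}$ or $\mathrm{sp}(v_1)\ge\mathrm{wp}(v_2)$ or $\mathrm{mode}(v_2)=\mathtt{SO}$. For phasers, $P\unrhd Q$ iff $P(t)\unrhd Q(t')$ for all $t\in\mathrm{dom}\,P$, $t'\in\mathrm{dom}\,Q$; $P\mathbin{||}Q$ iff $P\unrhd Q$ and $Q\unrhd P$. $P$ is well-ordered iff $P\unrhd P$. Reduction $P\to_t^{o}Q$ is defined by four rules. Signal: if $P(t)=v$, $\mathrm{CanSignal}(v)$, and ($\mathrm{mode}(v)=\mathtt{SW}\Rightarrow\mathrm{wp}(v)=\mathrm{sp}(v)$), then $Q=P[t\mapsto v']$ with $v'$ equal to $v$ except $\mathrm{sp}(v')=\mathrm{sp}(v)+1$. Wait: if $P(t)=v$, $\mathrm{CanWait}(v)$, ($\mathrm{mode}(v)=\mathtt{SW}\Rightarrow\mathrm{wp}(v)+1=\mathrm{sp}(v)$),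 and $\mathrm{Sync}(P,t)$, meaning that every $t'\in\mathrm{dom}\,P$ with $\mathrm{CanSignal}(P(t'))$ has $\mathrm{sp}(P(t'))>\mathrm{wp}(v)$, then $Q=P[t\mapsto v']$ with $v'$ equal to $v$ except $\mathrm{wp}(v')=\mathrm{wp}(v)+1$. Register$(t',r)$: if $t'\notin\mathrm{dom}\,P$, $P(t)=v$, ($\mathrm{CanWait}(r)\Rightarrow\mathrm{CanWait}(v)$) and ($\mathrm{CanSignal}(r)\Rightarrow\mathrm{CanSignal}(v)$), then $Q=P[t'\mapsto(\mathrm{sp}(v),\mathrm{wp}(v),r)]$. Drop: if $t\in\mathrm{dom}\,P$, then $Q$ is $P$ with $t$ removed. $P\to Q$ means $P\to_t^{o}Q$ for some $t,o$. *)

From Stdlib Require Import Arith List.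

Inductive mode : Type := SW | SO | WO.

Record view : Type := mkView { sp : nat; wp : nat; vmode : mode }.

Definition CanSignalM (m : mode) : Prop := m = SW \/ m = SO.
Definition CanWaitM (m : mode) : Prop := m = SW \/ m = WO.
Definition CanSignal (v : view) : Prop := CanSignalM (vmode v).
Definition CanWait (v : view) : Prop := CanWaitM (vmode v).

Definition tid := nat.

Definition phaser := tid -> option view.

Definition finite_phaser (P : phaser) : Prop :=
  exists l : list tid, forall t, P t <> None -> In t l.

Definition in_dom (P : phaser) (t : tid) : Prop := P t <> None.

Definition upd (P : phaser) (t : tid) (v : view) : phaser :=
  fun t' => if Nat.eqb t' t then Some v else P t'.

Definition remove (P : phaser) (t : tid) : phaser :=
  fun t' => if Nat.eqb t' t then None else P t'.

Definition view_ge (v1 v2 : view) : Prop :=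
  vmode v1 = WO \/ sp v1 >= wp v2 \/ vmode v2 = SO.

Definition phaser_ge (P Q : phaser) : Prop :=
  forall t t' v v', P t = Some v -> Q t' = Some v' -> view_ge v v'.

Definition phaser_par (P Q : phaser) : Prop := phaser_ge P Q /\ phaser_ge Q P.

Definition well_ordered (P : phaser) : Prop := phaser_ge P P.

Definition Sync (P : phaser) (t : tid) : Prop :=
  exists v, P t = Some v /\
  forall t' v', P t' = Some v' -> CanSignal v' -> sp v' > wp v.

Inductive op : Type :=
  | OSignal | OWait | ORegister (t' : tid) (r : mode) | ODrop.

Inductive reduces : phaser -> tid -> op -> phaser -> Prop :=
  | R_signal : forall P t v,
      P t = Some v -> CanSignal v ->
      (vmode v = SW -> wp v = sp v) ->
      reduces P t OSignal (upd P t (mkView (S (sp v)) (wp v) (vmode v)))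
  | R_wait : forall P t v,
      P t = Some v -> CanWait v ->
      (vmode v = SW -> wp v + 1 = sp v) ->
      Sync P t ->
      reduces P t OWait (upd P t (mkView (sp v) (S (wp v)) (vmode v)))
  | R_register : forall P t t' r v,
      P t' = None -> P t = Some v ->
      (CanWaitM r -> CanWait v) ->
      (CanSignalM r -> CanSignal v) ->
      reduces P t (ORegister t' r) (upd P t' (mkView (sp v) (wp v) r))
  | R_drop : forall P t,
      in_dom P t ->
      reduces P t ODrop (remove P t).

Definition step (P Q : phaser) : Prop := exists t o, reduces P t o Q.

(* Every reduction changes at most one view, and only in ways that cannot break
   the ordering against the other views of P: a signal raises sp and a wait
   raises wp only when Sync guarantees that every signaller is already past the
   new wait phase; a registered view copies the phases of its parent, with a
   mode that can signal or wait only if the parent can; a drop just removes a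
   view. Hence the ordering of P against itself transfers to P against Q. *)
From Pilot Require Import Defs.
From Stdlib Require Import Arith List Lia.

Lemma view_ge_weaken_l (u u' w : view) :
  sp u <= sp u' -> (CanSignal u' -> CanSignal u) -> view_ge u w -> view_ge u' w.
Proof.
  unfold view_ge, CanSignal, CanSignalM; intros Hsp Hcs [Hu | [Hge | Hw]].
  - destruct (vmode u') eqn:Hm; auto.
    + destruct Hcs as [H | H]; auto; congruence.
    + destruct Hcs as [H | H]; auto; congruence.
  - right; left; lia.
  - auto.
Qed.

Lemma view_ge_weaken_r (u w w' : view) :
  wp w' <= wp w -> (CanWait w' -> CanWait w) -> view_ge u w -> view_ge u w'.
Proof.
  unfold view_ge, CanWait, CanWaitM; intros Hwp Hcw [Hu | [Hge | Hw]].
  - auto.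
  - right; left; lia.
  - destruct (vmode w') eqn:Hm; auto.
    + destruct Hcw as [H | H]; auto; congruence.
    + destruct Hcw as [H | H]; auto; congruence.
Qed.

Lemma view_ge_of_sp_ge (u w : view) :
  (CanSignal u -> wp w <= sp u) -> view_ge u w.
Proof.
  unfold view_ge, CanSignal, CanSignalM; intros H.
  destruct (vmode u); auto; right; left; apply H; auto.
Qed.

Lemma phaser_ge_upd_l (P Q : phaser) (t : tid) (w : view) :
  phaser_ge P Q -> (forall t' v, Q t' = Some v -> view_ge w v) ->
  phaser_ge (upd P t w) Q.
Proof.
  unfold phaser_ge, upd; intros HPQ Hw a b x y Ha Hb.
  destruct (Nat.eqb a t); [injection Ha as <-|]; eauto.
Qed.

Lemma phaser_ge_upd_r (P Q : phaser) (t : tid) (w : view) :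
  phaser_ge P Q -> (forall t' v, P t' = Some v -> view_ge v w) ->
  phaser_ge P (upd Q t w).
Proof.
  unfold phaser_ge, upd; intros HPQ Hw a b x y Ha Hb.
  destruct (Nat.eqb b t); [injection Hb as <-|]; eauto.
Qed.

Lemma phaser_ge_remove_l (P Q : phaser) (t : tid) :
  phaser_ge P Q -> phaser_ge (Defs.remove P t) Q.
Proof.
  unfold phaser_ge, Defs.remove; intros HPQ a b x y Ha Hb.
  destruct (Nat.eqb a t); [discriminate | eauto].
Qed.

Lemma phaser_ge_remove_r (P Q : phaser) (t : tid) :
  phaser_ge P Q -> phaser_ge P (Defs.remove Q t).
Proof.
  unfold phaser_ge, Defs.remove; intros HPQ a b x y Ha Hb.
  destruct (Nat.eqb b t); [discriminate | eauto].
Qed.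

Theorem lemma3 (P Q : phaser) :
  finite_phaser P -> well_ordered P -> step P Q -> phaser_par P Q.
Proof.
  intros _ HP [t [o R]]; unfold well_ordered in HP.
  destruct R as [P t v Pt _ _ | P t v Pt _ _ [v0 [Pt0 Hsync]]
                | P t t' r v _ Pt Hwait Hsignal | P t _]; split.
  - apply phaser_ge_upd_r; auto.
    intros t1 u Pu; apply view_ge_weaken_r with v; simpl; eauto.
  - apply phaser_ge_upd_l; auto.
    intros t1 u Pu; apply view_ge_weaken_l with v; simpl; eauto.
  - apply phaser_ge_upd_r; auto.
    rewrite Pt in Pt0; injection Pt0 as <-.
    intros t1 u Pu; apply view_ge_of_sp_ge; simpl.
    intros Hu; specialize (Hsync t1 u Pu Hu); lia.
  - apply phaser_ge_upd_l; auto.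
    intros t1 u Pu; apply view_ge_weaken_l with v; simpl; eauto.
  - apply phaser_ge_upd_r; auto.
    intros t1 u Pu; apply view_ge_weaken_r with v; simpl; eauto.
  - apply phaser_ge_upd_l; auto.
    intros t1 u Pu; apply view_ge_weaken_l with v; simpl; eauto.
  - apply phaser_ge_remove_r; exact HP.
  - apply phaser_ge_remove_l; exact HP.
Qed.
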